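(* Let $G=(V,E)$ with $|V|\ge 3$, $N\ge3$, $\varepsilon\in(0,\frac1{N-1}]$ and $s_0\in S_{nc}$. Then for every $\gamma\in(0,1)$, every trigger strategies profile $\bar\sigma$ of $\Gamma_N(G|s_0,\gamma,\varepsilon)$ is nonpositional.
   Context: Setting. $G=(V,E)$ is a finite, simple, connected, undirected graph; $N\ge 3$ is an integer; $\gamma\in(0,1)$ and $\varepsilon\in[0,\frac1{N-1}]$ are parameters. There are $N$ tokens: cops $C_1,\dots,C_{N-1}$ (tokens $1,\dots,N-1$) and the robber $R$ (token $N$). A state is $s=(x^1,\dots,x^N,n)$ where $x^i\in V$ is the position of token $i$ and $n\in\{1,\dots,N\}$ is the token that moves next; $S^n$ denotes the set of states with token $n$ to move. A state is a capture state if $x^i=x^N$ for some $i\le N-1$; $S_{nc}$ is the set of noncapture states. In each turn exactly one token, the one to move, moves to a vertex of its closed neighbourhood (it may stay put); the order of moves is $C_1,C_2,\dots,C_{N-1},R,C_1,\dots$. Starting from an initial state $s_0\in S_{nc}$ at time $0$, the capture time is the first time $t$ at which a capture state occurs (infinite if never); after capture the game is over. Auxiliary games. For $m\in\{1,\dots,N\}$, $\Gamma_N^m(G|s_0,\gamma,\varepsilon)$ is the two-player zero-sum game in which player $P_m$ controls token $m$ and player $P_{-m}$ controls all other tokens, with the following payoff to $P_m$ ($P_{-m}$ receives its negative): $0$ if no capture ever occurs; if capture occurs at time $t$: for $m=N$, $-\gamma^t$; for $m\le N-1$, $\frac{1-\varepsilon}{K}\gamma^t$ if exactly $K\in\{1,\dots,N-2\}$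 cops, including $C_m$, are on the robber's vertex, $\frac{\varepsilon}{N-K-1}\gamma^t$ if exactly $K\in\{1,\dots,N-2\}$ cops, not including $C_m$, are on the robber's vertex, and $\frac{\gamma^t}{N-1}$ if all $N-1$ cops are on the robber's vertex. $\Gamma^N_N$ is the modified cops-and-robber (CR) game. A pure positional strategy for token $n$ maps each state in $S^n\cap S_{nc}$ to an allowed next vertex. Each $\Gamma^m_N$ has optimal pure positional strategies (optimal from every initial state). For $m,n\in\{1,\dots,N\}$, $\phi^n_m$ denotes the strategy of token $n$ in a chosen pair of optimal pure positional strategies of $\Gamma^m_N$ (so $\phi^m_m$ is $P_m$'s optimal strategy and $(\phi^n_m)_{n\ne m}$ is $P_{-m}$'s). $\widehat\Sigma^n$ is the set of pure positional strategies of token $n$ that are components of optimal strategy pairs of $\Gamma^N_N$ (CR-optimal strategies). Trigger strategies. Given a choice of $(\phi^n_m)_{n,m}$, the trigger strategies profile $\bar\sigma=(\bar\sigma^1,\dots,\bar\sigma^N)$ of the $N$-player SCAR game $\Gamma_N(G|s_0,\gamma,\varepsilon)$ (same board and moves; player $n$ controls token $n$) is: token $n$, at current state $s$, plays $\phi^n_n(s)$ as long as every other player $m$ has followed $\phi^m_m$, and plays $\phi^n_m(s)$ from the moment a player $m\neq n$ deviates from $\phi^m_m$. Different choices of the optimal strategies give different trigger strategies profiles. $\bar\sigma$ is called positional if for all $n,m\in\{1,\dots,N\}$ there is $\widehat\sigma^n\in\widehat\Sigma^n$ with $\phi^n_m(s)=\widehat\sigma^n(s)$ for every state $s\in S^n\cap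 S_{nc}$ reachable from $s_0$ by a finite sequence of legal moves passing only through noncapture states; otherwise $\bar\sigma$ is nonpositional. *)

From Stdlib Require Import Reals ClassicalEpsilon.
From mathcomp Require Import all_boot.

Set Implicit Arguments.
Unset Strict Implicit.
Unset Printing Implicit Defensive.

Section SCAR.

Variable V : finType.
Variable e : rel V.
(* Number of tokens; tokens are 'I_N, token N-1 (0-based) is the robber,
   tokens 0..N-2 are the cops C_1..C_{N-1}. *)
Variable N : nat.

Definition is_rob (i : 'I_N) : bool := val i == N.-1.

Definition State : finType := ({ffun 'I_N -> V} * 'I_N)%type.
Definition pos (s : State) (i : 'I_N) : V := s.1 i.
Definition mover (s : State) : 'I_N := s.2.

Definition allowed (x y : V) : bool := (x == y) || e x y.

Definition capture (s : State) : bool :=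
  [exists i, [exists j, [&& ~~ is_rob i, is_rob j & pos s i == pos s j]]].
Definition noncap (s : State) : bool := ~~ capture s.

Definition step (s : State) (v : V) : State :=
  ([ffun i => if i == mover s then v else pos s i], ordS (mover s)).

Definition nc_move : rel State :=
  fun s s' => noncap s && [exists v, allowed (pos s (mover s)) v && (s' == step s v)].

Definition reachable (s0 s : State) : bool := connect nc_move s0 s.

(* General (history-dependent) pure strategies: given the past history and the
   current state, the chosen vertex. *)
Definition hstrat := seq State -> State -> V.
Definition legal_h (n : 'I_N) (sg : hstrat) : Prop :=
  forall h s, mover s = n -> noncap s -> allowed (pos s n) (sg h s).

(* Pure positional strategies (only their values on S^n ∩ S_nc matter). *)
Definition pstrat := State -> V.
Definition legal_p (n : 'I_N) (sg : pstrat) : Prop :=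
  forall s, mover s = n -> noncap s -> allowed (pos s n) (sg s).
Definition of_pos (sg : pstrat) : hstrat := fun _ s => sg s.

(* The play generated by a profile P from s0: (history before time t, state at t). *)
Fixpoint play (P : 'I_N -> hstrat) (s0 : State) (t : nat) : seq State * State :=
  match t with
  | 0 => ([::], s0)
  | t'.+1 => let hs := play P s0 t' in
             (rcons hs.1 hs.2, step hs.2 (P (mover hs.2) hs.1 hs.2))
  end.
Definition state_at P s0 t : State := (play P s0 t).2.

Definition payoff (w : State -> R) (gamma : R) (P : 'I_N -> hstrat) (s0 : State) : R :=
  match excluded_middle_informative (exists t, capture (state_at P s0 t)) with
  | left ex => Rmult (pow gamma (@ex_minn (fun t => capture (state_at P s0 t)) ex))
                (w (state_at P s0 (@ex_minn (fun t => capture (state_at P s0 t)) ex)))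
  | right _ => R0
  end.

Definition ncops_on_rob (s : State) : nat :=
  #|[set i : 'I_N | ~~ is_rob i && [exists j, is_rob j && (pos s i == pos s j)]]|.

Definition weight (eps : R) (m : 'I_N) (s : State) : R :=
  if is_rob m then Ropp R1
  else let K := ncops_on_rob s in
       if K == N.-1 then Rinv (INR N.-1)
       else if [exists j, is_rob j && (pos s m == pos s j)]
            then Rdiv (Rminus R1 eps) (INR K)
            else Rdiv eps (INR (N - K - 1)).

Definition upd (P : 'I_N -> hstrat) (m : 'I_N) (sg : hstrat) : 'I_N -> hstrat :=
  fun n => if n == m then sg else P n.

(* phi : 'I_N -> pstrat is a pair of optimal pure positional strategies of Γ^m_N,
   optimal (saddle point) from every initial noncapture state, against all
   pure strategies of the deviating player. *)
Definition optimal (gamma eps : R) (m : 'I_N) (phi : 'I_N -> pstrat) : Prop :=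
  (forall n, legal_p n (phi n)) /\
  forall s, noncap s ->
    (forall sg, legal_h m sg ->
       Rle (payoff (weight eps m) gamma (upd (fun n => of_pos (phi n)) m sg) s)
           (payoff (weight eps m) gamma (fun n => of_pos (phi n)) s)) /\
    (forall tau : 'I_N -> hstrat, (forall n, n != m -> legal_h n (tau n)) ->
       Rle (payoff (weight eps m) gamma (fun n => of_pos (phi n)) s)
           (payoff (weight eps m) gamma (upd tau m (of_pos (phi m))) s)).

(* CR-optimal strategies of token n: components of optimal pairs of Γ^N_N. *)
Definition CR_optimal (gamma eps : R) (n : 'I_N) (sg : pstrat) : Prop :=
  exists r : 'I_N, is_rob r /\
  exists psi : 'I_N -> pstrat, optimal gamma eps r psi /\ psi n = sg.

(* A choice of optimal strategies: phi m n = φ^n_m. *)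
Definition trigger_choice (gamma eps : R) (phi : 'I_N -> 'I_N -> pstrat) : Prop :=
  forall m, optimal gamma eps m (phi m).

(* The trigger strategies profile determined by phi (for reference): token n
   plays φ^n_n until the first deviation by some player m ≠ n, then φ^n_m. *)
Definition trigger_profile (phi : 'I_N -> 'I_N -> pstrat) : 'I_N -> hstrat :=
  fun n h s =>
    let hs := rcons h s in
    let dev := [seq (mover (nth s hs k), k) | k <- iota 0 (size h)
                 & (mover (nth s hs k) != n) &&
                   (nth s hs k.+1 != step (nth s hs k)
                        (phi (mover (nth s hs k)) (mover (nth s hs k)) (nth s hs k)))] in
    match dev with
    | [::] => phi n n s
    | (m, _) :: _ => phi m n s
    end.

Definition positional (gamma eps : R) (s0 : State) (phi : 'I_N -> 'I_N -> pstrat) : Prop :=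
  forall n m : 'I_N, exists sh : pstrat, CR_optimal gamma eps n sh /\
    forall s, mover s = n -> noncap s -> reachable s0 s -> phi m n s = sh s.

Definition nonpositional gamma eps s0 phi : Prop := ~ positional gamma eps s0 phi.

End SCAR.

From Pilot Require Import Defs.
From Stdlib Require Import Reals Lra ClassicalEpsilon.
From mathcomp Require Import all_boot.

Set Implicit Arguments.
Unset Strict Implicit.
Unset Printing Implicit Defensive.

(* Suppose the trigger profile were positional. In the cops-and-robber game a cop
   to move next to the robber must capture him at once: the cops can force capture
   at time 1, and a later capture (or none) pays the robber more than [-gamma].
   Positionality transfers this to the strategy [phi m n] of every cop [n] in the
   game [Gamma^m] of another cop [m], at every reachable state. There [m] then
   earns [gamma * eps / (N - 2) > 0] from [n]'s lone capture, yet the coalition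
   could postpone this lone capture by one or two moves (the robber steps onto
   [n]; or, with at least three cops, [n] waits and a second adjacent cop
   strikes), multiplying [m]'s payoff by a power of [gamma < 1]. This contradicts
   the optimality of the coalition in [Gamma^m]. Connectivity and [#|V| >= 3]
   provide a reachable position with the required adjacencies. *)

(* [Reals] also exports a [pos]. *)
Local Notation pos := Defs.pos.

Lemma exists_third (V : finType) (a b : V) : 2 < #|V| -> exists w, w \notin [set a; b].
Proof.
move=> hV; apply/existsP; rewrite -negb_forall; apply: contraL hV => /forallP allin.
rewrite -leqNgt -cardsT (@leq_trans #|[set a; b]|) ?subset_leq_card //.
  by apply/subsetP => w _; apply: allin.
by rewrite cards2 ltnS leq_b1.
Qed.

Lemma path_to_neighbor (V : finType) (e : rel V) (x b : V) :
  connect e x b -> x != b ->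
  exists q, [/\ path e x q, all (predC1 b) q & e (last x q) b].
Proof.
case/connectP => p; elim: p x => [|y p IH] x /=; first by move=> _ ->; rewrite eqxx.
case/andP => exy yp lastb xb.
have [yb|yb] := eqVneq y b; first by exists [::]; rewrite /= -yb.
have [q [yq qb lastq]] := IH y yp lastb yb.
by exists (y :: q); rewrite /= exy yq yb.
Qed.

Lemma path_exit (V : finType) (e : rel V) (S : pred V) (x : V) (p : seq V) :
  S x -> path e x p -> ~~ S (last x p) -> exists u v, [/\ S u, ~~ S v & e u v].
Proof.
elim: p x => [|y p IH] x /= Sx; first by rewrite Sx.
case/andP => exy yp; have [Sy|nSy] := boolP (S y); first exact: IH.
by exists x, y.
Qed.

Lemma pow_lt_self (g : R) (T : nat) : Rlt R0 g /\ Rlt g R1 -> 1 < T -> Rlt (pow g T) g.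
Proof.
move=> [g0 g1] /subnK <-; rewrite pow_add /=.
have : Rle (pow g (T - 2)) 1 by rewrite -(pow1 (T - 2)); apply: pow_incr; lra.
have := pow_le g (T - 2) (Rlt_le _ _ g0); nra.
Qed.

Section Payoff.
Variables (V : finType) (N : nat) (w : State V N -> R) (gamma : R).
Variables (P : 'I_N -> hstrat V N) (s : State V N).

Lemma payoff_first_capture T :
  capture (state_at P s T) -> (forall t, t < T -> ~~ capture (state_at P s t)) ->
  payoff w gamma P s = Rmult (pow gamma T) (w (state_at P s T)).
Proof.
move=> capT early; rewrite /payoff.
case: excluded_middle_informative => [ex|]; last by case; exists T.
case: ex_minnP => t capt tmin; suff -> : t = T by [].
apply/eqP; rewrite eqn_leq tmin //= leqNgt; apply/negP => /early; by rewrite capt.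
Qed.

Lemma payoff_late T :
  (forall t, t < T -> ~~ capture (state_at P s t)) ->
  payoff w gamma P s = R0 \/
  exists2 t, T <= t & payoff w gamma P s = Rmult (pow gamma t) (w (state_at P s t)).
Proof.
move=> early; rewrite /payoff; case: excluded_middle_informative => [ex|_]; last by left.
right; case: ex_minnP => t capt _; exists t => //.
by rewrite leqNgt; apply/negP => /early; rewrite capt.
Qed.

End Payoff.

Section Board.
Variables (V : finType) (e : rel V) (N : nat).
Hypothesis hN : 2 < N.

Fact rob_subproof : N.-1 < N. Proof. by case: N hN. Qed.
Fact cop0_subproof : 0 < N. Proof. exact: ltnW (ltnW hN). Qed.
Fact cop1_subproof : 1 < N. Proof. exact: ltnW hN. Qed.
Fact copL_subproof : N.-2 < N. Proof. by case: N hN => [|[|n]]. Qed.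

(* Tokens are numbered from 0: the cops are 0, ..., N-2 and the robber is N-1;
   [copL] is the last cop, who moves just before the robber. *)
Definition rob : 'I_N := Ordinal rob_subproof.
Definition cop0 : 'I_N := Ordinal cop0_subproof.
Definition cop1 : 'I_N := Ordinal cop1_subproof.
Definition copL : 'I_N := Ordinal copL_subproof.

Lemma is_robE (i : 'I_N) : is_rob i = (i == rob).
Proof. by []. Qed.

Lemma cop0_cop : ~~ is_rob cop0.
Proof. by rewrite /is_rob /=; case: N hN => [|[|n]]. Qed.

Lemma cop1_cop : ~~ is_rob cop1.
Proof. by rewrite /is_rob /=; case: N hN => [|[|[|n]]]. Qed.

Lemma copL_cop : ~~ is_rob copL.
Proof. by rewrite /is_rob /=; case: N hN => [|[|n]] // _; rewrite /= ltn_eqF. Qed.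

Lemma copL_neq_cop1 : 3 < N -> (copL == cop1) = false.
Proof. by rewrite -val_eqE /=; case: N => [|[|[|[|n]]]]. Qed.

Lemma cop0_neq_copL : (cop0 == copL) = false.
Proof. by rewrite -val_eqE /=; case: N hN => [|[|[|n]]]. Qed.

Lemma ordS_copL : ordS copL = rob.
Proof. by apply: val_inj => /=; case: N hN => [|[|n]] //= _; rewrite modn_small. Qed.

Lemma ordS_rob : ordS rob = cop0.
Proof. by apply: val_inj => /=; case: N hN => [|n] //= _; rewrite modnn. Qed.

Lemma cop_neq_rob (i : 'I_N) : ~~ is_rob i -> (i == rob) = false.
Proof. exact: negbTE. Qed.

Lemma rob_neq_cop (i : 'I_N) : ~~ is_rob i -> (rob == i) = false.
Proof. by rewrite eq_sym; apply: negbTE. Qed.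

Lemma cops_of_three i : N = 3 -> ~~ is_rob i -> i = cop0 \/ i = copL.
Proof.
move=> N3; rewrite is_robE; case: i => [[|[|[|k]]] ik] ir; [left | right | |].
- exact: val_inj.
- by apply: val_inj; rewrite /= N3.
- by rewrite -val_eqE /= N3 in ir.
- by have : k.+3 < 3 by rewrite -[3]N3.
Qed.

Definition setpos (f : {ffun 'I_N -> V}) (j : 'I_N) (v : V) : {ffun 'I_N -> V} :=
  [ffun i => if i == j then v else f i].

Lemma setposE f j v i : setpos f j v i = if i == j then v else f i.
Proof. by rewrite ffunE. Qed.

Lemma pos_step (s : State V N) v i : pos (step s v) i = if i == mover s then v else pos s i.
Proof. exact: setposE. Qed.

Lemma state_atS (P : 'I_N -> hstrat V N) s t :
  state_at P s t.+1 =
  step (state_at P s t) (P (mover (state_at P s t)) (play P s t).1 (state_at P s t)).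
Proof. by []. Qed.

Lemma step_stay (s : State V N) : step s (pos s (mover s)) = (s.1, ordS (mover s)).
Proof. by congr pair; apply/ffunP => i; rewrite ffunE; case: eqP => // ->. Qed.

Lemma noncapP (s : State V N) :
  reflect (forall i, ~~ is_rob i -> pos s i != pos s rob) (noncap s).
Proof.
apply: (iffP existsPn) => [nc i ci | off i].
  by apply: contraNneq (nc i) => ir; apply/existsP; exists rob; rewrite ci is_robE ir !eqxx.
apply/existsPn => j; rewrite (is_robE j); case: (j =P rob) => [->|_]; last by rewrite andFb andbF.
by case: (boolP (is_rob i)) => //= ci; apply: off.
Qed.

Lemma capture_by (s : State V N) i : ~~ is_rob i -> pos s i = pos s rob -> capture s.
Proof. by move=> ci ir; apply/existsP; exists i; apply/existsP; exists rob; rewrite ci is_robE ir !eqxx. Qed.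

Definition cop_free (f : {ffun 'I_N -> V}) : Prop := forall i, ~~ is_rob i -> f i != f rob.

Lemma noncap_cop_free f k : noncap ((f, k) : State V N) <-> cop_free f.
Proof. by split=> [/noncapP|ff]; last apply/noncapP. Qed.

Lemma cop_free_setpos f i v : cop_free f -> ~~ is_rob i -> v != f rob -> cop_free (setpos f i v).
Proof.
move=> ff ci vr j cj; have ri := rob_neq_cop ci.
by rewrite !setposE ri; case: ifP => _; [apply: vr | apply: ff].
Qed.

Lemma iter_ordS (i : 'I_N) d : val (iter d (@ordS N) i) = (i + d) %% N.
Proof.
elim: d => [|d IH] /=; first by rewrite addn0 modn_small.
by rewrite IH -addn1 modnDml -addnA addn1 addnS.
Qed.

Section Reachability.
Variable s0 : State V N.

Lemma reachable_step s v :
  reachable e s0 s -> noncap s -> allowed e (pos s (mover s)) v -> reachable e s0 (step s v).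
Proof.
move=> rs ncs sv; apply: connect_trans rs (connect1 _).
by rewrite /nc_move ncs; apply/existsP; exists v; rewrite sv eqxx.
Qed.

Definition reached (f : {ffun 'I_N -> V}) : Prop :=
  cop_free f /\ forall k, reachable e s0 (f, k).

Lemma reached_state s : reachable e s0 s -> noncap s -> reached s.1.
Proof.
case: s => f i rs /noncap_cop_free ff; split=> // k.
have rot d : reachable e s0 (f, iter d (@ordS N) i).
  elim: d => //= d IH; rewrite -[X in reachable _ _ X](step_stay (f, _)).
  by apply: reachable_step => //; [apply/noncap_cop_free | rewrite /allowed eqxx].
suff -> : k = iter (k + (N - i)) (@ordS N) i by [].
apply: val_inj; rewrite iter_ordS addnCA subnKC; last exact: ltnW (ltn_ord i).
by rewrite addnC modnDl modn_small.
Qed.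

Lemma reached_move f j v :
  reached f -> allowed e (f j) v -> cop_free (setpos f j v) -> reached (setpos f j v).
Proof.
move=> [ff rf] fv ff'.
have ncj : noncap ((f, j) : State V N) by apply/noncap_cop_free.
have nc' : noncap (step (f, j) v) by apply/noncap_cop_free.
exact: reached_state (reachable_step (rf j) ncj fv) nc'.
Qed.

Lemma setpos_id f i : setpos f i (f i) = f.
Proof. by apply/ffunP => j; rewrite setposE; case: eqP => // ->. Qed.

Lemma setpos_setpos f i v w : setpos (setpos f i v) i w = setpos f i w.
Proof. by apply/ffunP => j; rewrite !setposE; case: eqP. Qed.

Lemma reached_walk f i q :
  ~~ is_rob i -> reached f -> path e (f i) q -> all (predC1 (f rob)) q ->
  reached (setpos f i (last (f i) q)).
Proof.
move=> ci; have ri := rob_neq_cop ci.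
elim: q f => [|y q IH] f rf /=; first by rewrite setpos_id.
case/andP => fy yq /andP [yr qr].
have rf' : reached (setpos f i y).
  by apply: reached_move rf _ (cop_free_setpos rf.1 ci yr); rewrite /allowed fy orbT.
by have := IH _ rf'; rewrite !setposE eqxx ri setpos_setpos; apply.
Qed.

Hypothesis e_conn : forall x y : V, connect e x y.

Lemma reached_adjacent f i :
  ~~ is_rob i -> reached f -> exists2 a, e a (f rob) & reached (setpos f i a).
Proof.
move=> ci rf; have [q [fq qr qe]] := path_to_neighbor (e_conn (f i) (f rob)) (rf.1 i ci).
by exists (last (f i) q) => //; apply: reached_walk.
Qed.

Lemma reached_two_adjacent f :
  reached f -> exists g, [/\ reached g, e (g copL) (g rob) & e (g cop0) (g rob)].
Proof.
move=> rf; have [a ar r1] := reached_adjacent cop0_cop rf.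
have [b br r2] := reached_adjacent copL_cop r1.
exists (setpos (setpos f cop0 a) copL b); split => //; move: br ar;
  by rewrite !setposE eqxx ?cop0_neq_copL !rob_neq_cop ?cop0_cop ?copL_cop.
Qed.

Lemma reached_lone_adjacent f :
  N = 3 -> irreflexive e -> 2 < #|V| -> reached f ->
  exists g, [/\ reached g, e (g copL) (g rob) & g cop0 != g copL].
Proof.
move=> N3 e_irr hV rf.
have [a ab r1] := reached_adjacent copL_cop rf.
have [g [{}r1 gL gR]] : exists g, [/\ reached g, g copL = a & g rob = f rob].
  by exists (setpos f copL a); rewrite !setposE eqxx rob_neq_cop ?copL_cop.
set b := f rob in ab gR.
have ba : b != a by apply: contraTneq ab => ->; rewrite e_irr.
have [g0a|g0a] := eqVneq (g cop0) a; last by exists g; rewrite gL gR.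
case: (pickP (fun c => e a c && (c != b))) => [c /andP [ac cb] | pendant].
  have ca : c != a by apply: contraTneq ac => ->; rewrite e_irr.
  exists (setpos g cop0 c); rewrite !setposE eqxx [copL == _]eq_sym cop0_neq_copL.
  rewrite rob_neq_cop ?cop0_cop //.
  rewrite gL gR; split => //; apply: reached_move r1 _ (cop_free_setpos r1.1 cop0_cop _).
    by rewrite g0a /allowed ac orbT.
  by rewrite gR.
(* [a] is a leaf hanging at [b]: the robber escapes to another neighbour [v] of [b]
   and [copL] follows onto [b]. *)
have [w wab] := exists_third a b hV.
have [p ap pw] := connectP (e_conn a w).
have [u [v [uab vab uv]]] : exists u v, [/\ u \in [set a; b], v \notin [set a; b] & e u v].
  by apply: (@path_exit _ e (fun x => x \in [set a; b]) a p); rewrite ?set21 // -pw.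
move: vab; rewrite !inE negb_or => /andP [va vb].
have {uab} ub : u = b.
  move: uab; rewrite !inE => /orP [/eqP ua | /eqP //].
  by move: (pendant v); rewrite /= -ua uv vb.
rewrite {u}ub in uv.
have at_a i : ~~ is_rob i -> g i = a by case/(cops_of_three N3) => ->.
have [g2 [r2 g2R g2L g20]] :
    exists g2, [/\ reached g2, g2 rob = v, g2 copL = a & g2 cop0 = a].
  exists (setpos g rob v); rewrite !setposE eqxx !cop_neq_rob ?copL_cop ?cop0_cop //.
  rewrite gL g0a; split => //; apply: reached_move r1 _ _; first by rewrite gR /allowed uv orbT.
  by move=> i ci; rewrite !setposE cop_neq_rob // eqxx at_a // eq_sym.
exists (setpos g2 copL b); rewrite !setposE eqxx cop0_neq_copL rob_neq_cop ?copL_cop //.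
rewrite g2R g20 eq_sym; split => //.
apply: reached_move r2 _ (cop_free_setpos r2.1 copL_cop _); first by rewrite g2L /allowed ab orbT.
by rewrite g2R eq_sym.
Qed.

End Reachability.

Lemma on_robE (s : State V N) i :
  [exists j, is_rob j && (pos s i == pos s j)] = (pos s i == pos s rob).
Proof.
apply/existsP/eqP => [[j /andP [jr /eqP ->]] | ->]; first by rewrite (eqP (jr : j == rob)).
by exists rob; rewrite is_robE !eqxx.
Qed.

Definition lone_cop (c : 'I_N) (s : State V N) : Prop :=
  pos s c = pos s rob /\ forall i, ~~ is_rob i -> i != c -> pos s i != pos s rob.

Lemma lone_cop_step (s : State V N) :
  noncap s -> ~~ is_rob (mover s) -> lone_cop (mover s) (step s (pos s rob)).
Proof.
move/noncapP=> nc cn; rewrite /lone_cop !pos_step eqxx rob_neq_cop //.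
by split=> // i ci ni; rewrite pos_step (negbTE ni); apply: nc.
Qed.

Section Game.
Variables gamma eps : R.
Hypothesis hg : Rlt R0 gamma /\ Rlt gamma R1.
Hypothesis heps : Rlt R0 eps.

Lemma weight_lone_cop m c (s : State V N) :
  ~~ is_rob m -> ~~ is_rob c -> m != c -> lone_cop c s ->
  weight eps m s = Rdiv eps (INR (N - 1 - 1)).
Proof.
move=> cm cc mc [cr others].
have one : ncops_on_rob s = 1.
  rewrite /ncops_on_rob -(cards1 c); apply: eq_card => i; rewrite !inE on_robE.
  have [->|ic] := eqVneq i c; first by rewrite cc cr eqxx.
  by case: (boolP (is_rob i)) => //= ci; apply/negbTE/others.
rewrite /weight (negbTE cm) one on_robE (negbTE (others m cm mc)).
by case: N hN => [|[|[|n]]].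
Qed.

Lemma weight_robber r (s : State V N) : is_rob r -> weight eps r s = Ropp R1.
Proof. by rewrite /weight => ->. Qed.

Lemma CR_optimal_capture n sh (s : State V N) :
  CR_optimal e gamma eps n sh -> noncap s -> mover s = n -> ~~ is_rob n ->
  e (pos s n) (pos s rob) -> sh s = pos s rob.
Proof.
case=> r [rr [psi [[_ opt] <-]]] nc sn cn adj; have [_ coal] := opt s nc.
pose tau k := of_pos (fun s' : State V N =>
  if allowed e (pos s' k) (pos s' rob) then pos s' rob else pos s' k).
have legal k : k != r -> legal_h e k (tau k).
  by move=> _ h s' _ _; rewrite /tau /of_pos; case: ifP => // _; rewrite /allowed eqxx.
have nr : (n == r) = false by apply: contraNF cn => /eqP ->.
have := coal tau legal.
rewrite (@payoff_first_capture _ _ _ _ (upd tau r (of_pos (psi r))) _ 1); first last.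
- by case.
- rewrite /state_at /= sn /upd nr /tau /of_pos /allowed adj orbT.
  by apply: (capture_by cn); rewrite !pos_step sn eqxx rob_neq_cop.
rewrite weight_robber //=.
have [//|miss] := eqVneq (psi n s) (pos s rob).
have early t : t < 2 -> ~~ capture (state_at (fun k => of_pos (psi k)) s t).
  case: t => [|[|]] // _; apply/noncapP => i ci.
  rewrite /state_at /= sn /of_pos !pos_step sn rob_neq_cop //.
  by case: ifP => _; [apply: miss | apply/noncapP].
case: (payoff_late (weight eps r) gamma early) => [-> | [t t2 ->]]; rewrite ?weight_robber //.
  by case: hg => *; lra.
by have := pow_lt_self hg t2; case: hg => *; lra.
Qed.

Lemma lone_cop_capture c (s : State V N) : ~~ is_rob c -> lone_cop c s -> capture s.
Proof. by move=> cc [cr _]; apply: capture_by cc cr. Qed.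

Lemma lone_cop_weight_pos : Rlt R0 (Rdiv eps (INR (N - 1 - 1))).
Proof. by apply: Rdiv_lt_0_compat heps (lt_0_INR _ _); apply/ltP; case: N hN => [|[|[|n]]]. Qed.

Lemma optimal_coalition_no_delay m psi (s : State V N) tau T c :
  optimal e gamma eps m psi -> ~~ is_rob m -> noncap s ->
  ~~ is_rob (mover s) -> m != mover s -> psi (mover s) s = pos s rob ->
  (forall k, k != m -> legal_h e k (tau k)) -> 1 < T -> ~~ is_rob c -> m != c ->
  (forall t, t < T -> ~~ capture (state_at (upd tau m (of_pos (psi m))) s t)) ->
  lone_cop c (state_at (upd tau m (of_pos (psi m))) s T) -> False.
Proof.
move=> [_ opt] cm nc cn mn hit legal T1 cc mc early lone; have [_ coal] := opt s nc.
have at1 : state_at (fun k => of_pos (psi k)) s 1 = step s (pos s rob).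
  by rewrite /state_at /= /of_pos hit.
have lone1 := lone_cop_step nc cn; rewrite -at1 in lone1.
have := coal tau legal.
rewrite (payoff_first_capture _ _ (lone_cop_capture cc lone) early) (weight_lone_cop cm cc mc lone).
rewrite (payoff_first_capture _ _ (lone_cop_capture cn lone1)); last by case.
rewrite (weight_lone_cop cm cn mn lone1) /=.
by have := pow_lt_self hg T1; have := lone_cop_weight_pos; case: hg => *; nra.
Qed.

Section Positional.
Variables (s0 : State V N) (phi : 'I_N -> 'I_N -> pstrat V N).
Hypothesis phi_opt : trigger_choice e gamma eps phi.
Hypothesis phi_pos : positional e gamma eps s0 phi.

Lemma positional_capture m (s : State V N) :
  reachable e s0 s -> noncap s -> ~~ is_rob (mover s) -> e (pos s (mover s)) (pos s rob) ->
  phi m (mover s) s = pos s rob.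
Proof.
move=> rs nc cn adj; have [sh [crsh agree]] := phi_pos (mover s) m.
by rewrite agree //; apply: CR_optimal_capture crsh nc _ cn adj.
Qed.

Lemma positional_no_delay f m tau T c :
  reached s0 f -> e (f copL) (f rob) -> ~~ is_rob m -> m != copL ->
  (forall k, k != m -> legal_h e k (tau k)) -> 1 < T -> ~~ is_rob c -> m != c ->
  (forall t, t < T -> ~~ capture (state_at (upd tau m (of_pos (phi m m))) (f, copL) t)) ->
  lone_cop c (state_at (upd tau m (of_pos (phi m m))) (f, copL) T) -> False.
Proof.
move=> [ff rf] adj cm mL legal T1 cc mc early lone.
have nc : noncap ((f, copL) : State V N) by apply/noncap_cop_free.
apply: (optimal_coalition_no_delay (phi_opt m) cm nc copL_cop mL _ legal T1 cc mc early lone).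
exact: positional_capture (rf copL) nc copL_cop adj.
Qed.

Lemma robber_steps_onto_cop f m :
  symmetric e -> reached s0 f -> e (f copL) (f rob) -> ~~ is_rob m -> m != copL ->
  (forall i, ~~ is_rob i -> i != copL -> f i != f copL) -> False.
Proof.
move=> e_sym rf adj cm mL apart.
pose tau k := of_pos (fun s' : State V N =>
  if (k == rob) && allowed e (pos s' k) (f copL) then f copL else pos s' k).
have legal k : k != m -> legal_h e k (tau k).
  by move=> _ h s' _ _; rewrite /tau /of_pos; case: ifP => [/andP [] | _] //; rewrite /allowed eqxx.
pose P := upd tau m (of_pos (phi m m)).
have Lm : (copL == m) = false by rewrite eq_sym; apply: negbTE.
have at1 : state_at P (f, copL) 1 = (f, rob).
  by rewrite /state_at /= /P /upd Lm /tau /of_pos cop_neq_rob ?copL_cop // step_stay ordS_copL.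
have at2 : state_at P (f, copL) 2 = step (f, rob) (f copL).
  rewrite state_atS at1 /P /upd /= rob_neq_cop // /tau /of_pos eqxx /=.
  by rewrite /allowed /pos /= e_sym adj orbT.
apply: (positional_no_delay (T := 2) (c := copL) rf adj cm mL legal) => //.
- exact: copL_cop.
- by case=> [|[|]] //= _; rewrite -/P ?at1; apply/noncap_cop_free; case: rf.
- rewrite at2; split; first by rewrite !pos_step /= eqxx cop_neq_rob ?copL_cop.
  by move=> i ci iL; rewrite !pos_step /= eqxx cop_neq_rob //; apply: apart.
Qed.

Lemma second_cop_captures f :
  3 < N -> reached s0 f -> e (f copL) (f rob) -> e (f cop0) (f rob) -> False.
Proof.
move=> N4 rf adjL adj0.
pose tau k := of_pos (fun s' : State V N =>
  if (k == cop0) && allowed e (pos s' k) (pos s' rob) then pos s' rob else pos s' k).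
have legal k : k != cop1 -> legal_h e k (tau k).
  by move=> _ h s' _ _; rewrite /tau /of_pos; case: ifP => [/andP [] | _] //; rewrite /allowed eqxx.
pose P := upd tau cop1 (of_pos (phi cop1 cop1)).
have nc0 : noncap ((f, cop0) : State V N) by apply/noncap_cop_free; case: rf.
have at1 : state_at P (f, copL) 1 = (f, rob).
  rewrite /state_at /= /P /upd copL_neq_cop1 // /tau /of_pos.
  by rewrite [copL == _]eq_sym cop0_neq_copL step_stay ordS_copL.
have at2 : state_at P (f, copL) 2 = (f, cop0).
  rewrite state_atS at1 /P /upd /= rob_neq_cop ?cop1_cop // /tau /of_pos.
  by rewrite rob_neq_cop ?cop0_cop // -[rob]/(mover (f, rob)) step_stay ordS_rob.
have at3 : state_at P (f, copL) 3 = step (f, cop0) (pos (f, cop0) rob).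
  by rewrite state_atS at2 /P /upd /= /tau /of_pos eqxx /= /allowed /pos /= adj0 orbT.
have mL : cop1 != copL by rewrite eq_sym copL_neq_cop1.
apply: (positional_no_delay (T := 3) (c := cop0) rf adjL cop1_cop mL legal) => //.
- exact: cop0_cop.
- by case=> [|[|[|]]] //= _; rewrite -/P ?at1 ?at2 //; apply/noncap_cop_free; case: rf.
- by rewrite at3; apply: (lone_cop_step nc0 cop0_cop).
Qed.

End Positional.

End Game.

End Board.

Theorem mainTheorem4 (V : finType) (e : rel V)
  (e_sym : symmetric e) (e_irr : irreflexive e)
  (e_conn : forall x y : V, connect e x y) (hV : 3 <= #|V|)
  (N : nat) (hN : 3 <= N) (eps : R)
  (heps : Rlt R0 eps /\ Rle eps (Rinv (INR (N - 1))))
  (s0 : State V N) (hs0 : noncap s0) :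
  forall gamma : R, Rlt R0 gamma /\ Rlt gamma R1 ->
  forall phi : 'I_N -> 'I_N -> pstrat V N,
    trigger_choice e gamma eps phi ->
    nonpositional e gamma eps s0 phi.
Proof.
move=> gamma hg phi phi_opt phi_pos.
have r0 : reached e hN s0 s0.1 := reached_state hN (connect0 _ _) hs0.
have [N4 | N3] := ltnP 3 N.
  have [f [rf adjL adj0]] := reached_two_adjacent e_conn r0.
  exact: (second_cop_captures hg (proj1 heps) phi_opt phi_pos N4 rf adjL adj0).
have {}N3 : N = 3 by apply/eqP; rewrite eqn_leq N3 hN.
have [f [rf adj apart]] := reached_lone_adjacent e_conn N3 e_irr hV r0.
apply: (robber_steps_onto_cop hg (proj1 heps) phi_opt phi_pos e_sym rf adj (cop0_cop hN)).
  by rewrite cop0_neq_copL.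
by move=> i /(cops_of_three hN N3) [-> | ->] //; rewrite eqxx.
Qed.
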